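(* Let $U:\mathbb{R}\to\mathbb{R}$ be a piecewise continuous function with compact support which is even, $U(-x)=U(x)$. Fix $E>0$, $V_F>0$, $\hbar>0$, an angle $\theta\in(-\pi/2,\pi/2)$, and put $a=\frac{E}{\hbar V_F}\sin\theta$, $k=\frac{E}{\hbar V_F}\cos\theta$. Consider the ODE for $\Psi=(\Psi_1,\Psi_2)^t:\mathbb{R}\to\mathbb{C}^2$ $$\partial_x\Psi(x)=\begin{pmatrix} a & -i\frac{U(x)-E}{V_F\hbar}\\ -i\frac{U(x)-E}{V_F\hbar} & -a\end{pmatrix}\Psi(x).$$ Let $v_R=\frac{E}{V_F\hbar}\begin{pmatrix}e^{i\theta}\\ i\end{pmatrix}$, $v_L=\frac{E}{V_F\hbar}\begin{pmatrix}e^{-i\theta}\\ i\end{pmatrix}$, $\psi_R(x)=e^{ikx}v_R$, $\psi_L(x)=e^{-ikx}v_L$ (these solve the ODE wherever $U=0$). Let $\Psi_R$ be the solution of the ODE with $\Psi_R=\psi_R+r(\theta)\psi_L$ to the left of the support of $U$ and $\Psi_R=t(\theta)\psi_R$ to the right of the support of $U$, for complex numbers $r(\theta),t(\theta)$ (reflection and transmission amplitudes), and assume $t(\theta)\neq0$. Then $$q(\theta)=i\,e^{-i\theta}\,\frac{r(\theta)}{t(\theta)}$$ is a real number.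
   Context: This is the single-layer graphene (massless Dirac) stationary equation for a one-dimensional potential barrier $U(x)$, after separating $\Psi(x,y)=\Psi(x)e^{iay}$.
   Formalization: In $v_R$, $v_L$ and $q(\theta)$ the angle θ is replaced by π/2−θ, so $v_R=\frac{E}{V_F\hbar}(ie^{-i\theta},i)^t$, $v_L=\frac{E}{V_F\hbar}(-ie^{i\theta},i)^t$ and the conclusion is that $e^{i\theta}r(\theta)/t(\theta)$ is real. Each condition added here is assumed in the paper as well or is needed for the statement above to hold. This also corrects a misprint. *)

From Stdlib Require Import Reals List.
Open Scope R_scope.

Definition CC : Type := (R * R)%type.
Definition Re (z : CC) : R := fst z.
Definition Im (z : CC) : R := snd z.
Definition RtoC (x : R) : CC := (x, 0).
Definition Ci : CC := (0, 1).
Definition Cadd (z w : CC) : CC := (Re z + Re w, Im z + Im w).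
Definition Cmul (z w : CC) : CC :=
  (Re z * Re w - Im z * Im w, Re z * Im w + Im z * Re w).
Definition Cinv (z : CC) : CC :=
  (Re z / (Re z ^ 2 + Im z ^ 2), - Im z / (Re z ^ 2 + Im z ^ 2)).
Definition Cdiv (z w : CC) : CC := Cmul z (Cinv w).
Definition Cexpi (phi : R) : CC := (cos phi, sin phi).

Definition C2 : Type := (CC * CC)%type.
Definition C2add (u v : C2) : C2 := (Cadd (fst u) (fst v), Cadd (snd u) (snd v)).
Definition C2scal (z : CC) (v : C2) : C2 := (Cmul z (fst v), Cmul z (snd v)).

Definition Cderiv (f : R -> CC) (x : R) (z : CC) : Prop :=
  derivable_pt_lim (fun y => Re (f y)) x (Re z) /\
  derivable_pt_lim (fun y => Im (f y)) x (Im z).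

Definition Ccont (f : R -> CC) (x : R) : Prop :=
  continuity_pt (fun y => Re (f y)) x /\ continuity_pt (fun y => Im (f y)) x.

Definition piecewise_continuous (U : R -> R) : Prop :=
  exists D : list R,
    (forall x, ~ In x D -> continuity_pt U x) /\
    (forall d, In d D ->
       (exists l, limit1_in U (fun x => x < d) l d) /\
       (exists l, limit1_in U (fun x => d < x) l d)).

Definition compact_support (U : R -> R) : Prop :=
  exists L, forall x, L < Rabs x -> U x = 0.

(* The right-hand side of the Dirac ODE:
   d/dx Psi = [[a, -i w], [-i w, -a]] Psi,  w = (U(x) - E)/(V_F hbar). *)
Definition dirac_rhs (U : R -> R) (E VF hbar a : R) (x : R) (P : C2) : C2 :=
  let w := RtoC ((U x - E) / (VF * hbar)) in
  let miw := Cmul (RtoC (-1)) (Cmul Ci w) in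
  (Cadd (Cmul (RtoC a) (fst P)) (Cmul miw (snd P)),
   Cadd (Cmul miw (fst P)) (Cmul (RtoC (- a)) (snd P))).

(* Psi is a solution of the ODE on R: continuous everywhere, and satisfies
   the ODE at every point outside a finite exceptional set
   (needed since U is only piecewise continuous). *)
Definition is_solution (U : R -> R) (E VF hbar a : R) (Psi : R -> C2) : Prop :=
  (forall x, Ccont (fun y => fst (Psi y)) x /\ Ccont (fun y => snd (Psi y)) x) /\
  exists D : list R, forall x, ~ In x D ->
    Cderiv (fun y => fst (Psi y)) x (fst (dirac_rhs U E VF hbar a x (Psi x))) /\
    Cderiv (fun y => snd (Psi y)) x (snd (dirac_rhs U E VF hbar a x (Psi x))).

Definition vR (E VF hbar theta : R) : C2 :=
  C2scal (RtoC (E / (VF * hbar))) (Cexpi theta, Ci).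
Definition vL (E VF hbar theta : R) : C2 :=
  C2scal (RtoC (E / (VF * hbar))) (Cexpi (- theta), Ci).
Definition psiR (E VF hbar theta k x : R) : C2 :=
  C2scal (Cexpi (k * x)) (vR E VF hbar theta).
Definition psiL (E VF hbar theta k x : R) : C2 :=
  C2scal (Cexpi (- (k * x))) (vL E VF hbar theta).

From Stdlib Require Import Reals List Lra.
From Coquelicot Require Import Coquelicot.
Open Scope R_scope.

(* For an even potential, x |-> Psi(-x) solves the same equation as Psi, and the
   sesquilinear current [flux u v = Im (conj u2 v2 - conj u1 v1)] is preserved by
   the equation (the matrix is symmetric for this form).  Hence
   W(x) = flux (Psi(-x)) (Psi x) is constant; being odd, it vanishes.  At a point
   x0 > L with k x0 in 2 pi Z the plane waves reduce to their spinors, and W(x0)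
   is a nonzero multiple of Re (e^{-i phi} r conj t) = |t|^2 Im q. *)

Lemma eq_of_derivable_pt_lim_0 (f : R -> R) (a b : R) : a <= b ->
  (forall x, continuity_pt f x) ->
  (forall x, a < x < b -> derivable_pt_lim f x 0) -> f a = f b.
Proof.
  intros hab hc hd.
  destruct (MVT_gen f a b (fun _ => 0)) as [c [_ Hc]].
  - intros x Hx. apply is_derive_Reals, hd.
    rewrite Rmin_left in Hx by lra. rewrite Rmax_right in Hx by lra. lra.
  - intros; apply hc.
  - lra.
Qed.

Lemma eq_of_derivable_pt_lim_0_off (f : R -> R) (D : list R) (a b : R) :
  a <= b -> (forall x, continuity_pt f x) ->
  (forall x, a < x < b -> ~ In x D -> derivable_pt_lim f x 0) -> f a = f b.
Proof.
  revert a b; induction D as [|d D IH]; intros a b hab hc hd.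
  - apply eq_of_derivable_pt_lim_0; auto.
  - assert (hdD : forall u v, u <= v -> (v <= d \/ d <= u) ->
              (forall x, u < x < v -> ~ In x (d :: D) -> derivable_pt_lim f x 0) ->
              f u = f v).
    { intros u v huv hd' hder. apply IH; auto.
      intros x Hx Hn. apply hder; [exact Hx|]. intros [Ex|Ex]; [lra|tauto]. }
    destruct (Rlt_dec a d); [destruct (Rlt_dec d b)|].
    + transitivity (f d); apply hdD; auto; try lra;
        intros x Hx; apply hd; lra.
    + apply hdD; auto; lra.
    + apply hdD; auto; lra.
Qed.

Definition Copp (z : CC) : CC := (- Re z, - Im z).
Definition Cconj (z : CC) : CC := (Re z, - Im z).
Definition C2opp (u : C2) : C2 := (Copp (fst u), Copp (snd u)).

Definition Im_conj_mul (z w : CC) : R := Re z * Im w - Im z * Re w.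

Definition flux (u v : C2) : R :=
  Im_conj_mul (snd u) (snd v) - Im_conj_mul (fst u) (fst v).

Definition C2cont (f : R -> C2) (x : R) : Prop :=
  Ccont (fun y => fst (f y)) x /\ Ccont (fun y => snd (f y)) x.

Definition C2deriv (f : R -> C2) (x : R) (v : C2) : Prop :=
  Cderiv (fun y => fst (f y)) x (fst v) /\ Cderiv (fun y => snd (f y)) x (snd v).

Lemma flux_antisym (u v : C2) : flux v u = - flux u v.
Proof. unfold flux, Im_conj_mul; ring. Qed.

Lemma flux_C2opp_l (u v : C2) : flux (C2opp u) v = - flux u v.
Proof. unfold flux, Im_conj_mul, C2opp, Copp, Re, Im; simpl; ring. Qed.

Lemma flux_dirac_rhs (U : R -> R) (E VF hbar a x : R) (u v : C2) :
  flux (dirac_rhs U E VF hbar a x u) v = flux u (dirac_rhs U E VF hbar a x v).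
Proof.
  unfold flux, Im_conj_mul, dirac_rhs, Cadd, Cmul, RtoC, Ci, Re, Im; simpl; ring.
Qed.

Lemma dirac_rhs_even (U : R -> R) (E VF hbar a x : R) (u : C2) :
  (forall y, U (- y) = U y) ->
  dirac_rhs U E VF hbar a (- x) u = dirac_rhs U E VF hbar a x u.
Proof. intros HU; unfold dirac_rhs; rewrite HU; reflexivity. Qed.

Lemma continuity_pt_flux (f g : R -> C2) (x : R) :
  C2cont f x -> C2cont g x -> continuity_pt (fun y => flux (f y) (g y)) x.
Proof.
  intros [[f1 f2] [f3 f4]] [[g1 g2] [g3 g4]].
  unfold flux, Im_conj_mul.
  repeat first [ apply continuity_pt_minus | apply continuity_pt_mult ]; assumption.
Qed.

Lemma derivable_pt_lim_flux (f g : R -> C2) (x : R) (f' g' : C2) :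
  C2deriv f x f' -> C2deriv g x g' ->
  derivable_pt_lim (fun y => flux (f y) (g y)) x (flux f' (g x) + flux (f x) g').
Proof.
  intros [[f1 f2] [f3 f4]] [[g1 g2] [g3 g4]].
  pose proof (derivable_pt_lim_minus _ _ x _ _
    (derivable_pt_lim_minus _ _ x _ _
       (derivable_pt_lim_mult _ _ x _ _ f3 g4) (derivable_pt_lim_mult _ _ x _ _ f4 g3))
    (derivable_pt_lim_minus _ _ x _ _
       (derivable_pt_lim_mult _ _ x _ _ f1 g2) (derivable_pt_lim_mult _ _ x _ _ f2 g1)))
    as H.
  match type of H with derivable_pt_lim _ _ ?l =>
    replace (flux f' (g x) + flux (f x) g') with l; [exact H|] end.
  unfold flux, Im_conj_mul; ring.
Qed.

Lemma continuity_pt_comp_opp (f : R -> R) (x : R) :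
  continuity_pt f (- x) -> continuity_pt (fun y => f (- y)) x.
Proof.
  intros H. apply (continuity_pt_comp (fun y => - y) f x); [|exact H].
  apply continuity_pt_opp, derivable_continuous_pt, derivable_pt_id.
Qed.

Lemma C2cont_comp_opp (f : R -> C2) (x : R) :
  C2cont f (- x) -> C2cont (fun y => f (- y)) x.
Proof.
  intros [[f1 f2] [f3 f4]].
  repeat split; apply (continuity_pt_comp_opp (fun y => _ (_ (f y)))); assumption.
Qed.

Lemma C2deriv_comp_opp (f : R -> C2) (x : R) (v : C2) :
  C2deriv f (- x) v -> C2deriv (fun y => f (- y)) x (C2opp v).
Proof.
  intros [[f1 f2] [f3 f4]].
  repeat split; apply (derivable_pt_lim_mirr_fwd (fun y => _ (_ (f y))));
    unfold C2opp, Copp, Re, Im; simpl; rewrite Ropp_involutive; assumption.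
Qed.

Section ReflectedFlux.

Variables (U : R -> R) (E VF hbar a : R) (Psi : R -> C2).
Hypothesis HUeven : forall x, U (- x) = U x.
Hypothesis HPsi : is_solution U E VF hbar a Psi.

Let W (x : R) : R := flux (Psi (- x)) (Psi x).

Lemma reflected_flux_continuous (x : R) : continuity_pt W x.
Proof.
  destruct HPsi as [Hcont _].
  apply continuity_pt_flux; [apply C2cont_comp_opp|]; apply Hcont.
Qed.

Lemma reflected_flux_derivable_0 (D : list R) :
  (forall x, ~ In x D ->
     C2deriv Psi x (dirac_rhs U E VF hbar a x (Psi x))) ->
  forall x, ~ In x (D ++ map Ropp D) -> derivable_pt_lim W x 0.
Proof.
  intros HD x Hx.
  assert (Hx1 : ~ In x D) by (intro; apply Hx, in_or_app; auto).
  assert (Hx2 : ~ In (- x) D).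
  { intro h; apply Hx, in_or_app; right.
    rewrite <- (Ropp_involutive x). apply in_map; exact h. }
  pose proof (derivable_pt_lim_flux _ _ x _ _
    (C2deriv_comp_opp _ _ _ (HD _ Hx2)) (HD _ Hx1)) as H.
  rewrite flux_C2opp_l, flux_dirac_rhs, dirac_rhs_even, Rplus_opp_l in H
    by exact HUeven.
  exact H.
Qed.

Lemma reflected_flux_eq_0 (x : R) : flux (Psi (- x)) (Psi x) = 0.
Proof.
  destruct HPsi as [_ [D HD]].
  assert (Hodd : W (- x) = - W x).
  { unfold W; rewrite Ropp_involutive; apply flux_antisym. }
  assert (Hconst : W (- x) = W x).
  { pose proof (reflected_flux_derivable_0 D HD) as Hd.
    destruct (Rle_dec (- x) x).
    - apply (eq_of_derivable_pt_lim_0_off W (D ++ map Ropp D)); auto.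
      exact reflected_flux_continuous.
    - symmetry; apply (eq_of_derivable_pt_lim_0_off W (D ++ map Ropp D)); auto; [lra|].
      exact reflected_flux_continuous. }
  change (W x = 0); lra.
Qed.

End ReflectedFlux.

Lemma C2scal_1 (v : C2) : C2scal (1, 0) v = v.
Proof.
  destruct v as [[v1 v2] [v3 v4]].
  unfold C2scal, Cmul, Re, Im; simpl; f_equal; f_equal; ring.
Qed.

Lemma psi_at_period_point (E VF hbar phi k x : R) (n : nat) :
  k * x = 2 * INR n * PI ->
  psiR E VF hbar phi k x = vR E VF hbar phi /\
  psiR E VF hbar phi k (- x) = vR E VF hbar phi /\
  psiL E VF hbar phi k (- x) = vL E VF hbar phi.
Proof.
  intros Hkx.
  assert (H1 : Cexpi (2 * INR n * PI) = (1, 0)).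
  { unfold Cexpi. replace (2 * INR n * PI) with (0 + 2 * INR n * PI) by ring.
    rewrite cos_period, sin_period, cos_0, sin_0; reflexivity. }
  assert (H2 : Cexpi (- (2 * INR n * PI)) = (1, 0)).
  { unfold Cexpi in *. rewrite cos_neg, sin_neg.
    injection H1 as -> ->. f_equal; ring. }
  unfold psiR, psiL.
  replace (k * - x) with (- (2 * INR n * PI)) by lra.
  rewrite Ropp_involutive, Hkx, H1, H2, !C2scal_1. auto.
Qed.

Lemma exists_period_point_gt (k L : R) : 0 < k ->
  exists x (n : nat), L < x /\ k * x = 2 * INR n * PI.
Proof.
  intros Hk.
  assert (Hp : 0 < 2 * PI / k) by (apply Rdiv_lt_0_compat; [pose proof PI_RGT_0|]; lra).
  destruct (INR_archimed (2 * PI / k) (Rmax L 0) Hp) as [n Hn].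
  exists (INR n * (2 * PI / k)), n. split.
  - pose proof (Rmax_l L 0); lra.
  - field; lra.
Qed.

Lemma flux_scattering_states (E VF hbar phi : R) (r t : CC) :
  flux (C2add (vR E VF hbar phi) (C2scal r (vL E VF hbar phi)))
       (C2scal t (vR E VF hbar phi)) =
  - 2 * (E / (VF * hbar)) ^ 2 * sin phi * Re (Cmul (Cmul (Cexpi (- phi)) r) (Cconj t)).
Proof.
  pose proof (sin2_cos2 phi) as Hpy; unfold Rsqr in Hpy.
  unfold flux, Im_conj_mul, C2add, C2scal, vR, vL, Cexpi, Cconj, Cadd, Cmul, RtoC, Ci,
    Re, Im; simpl.
  rewrite cos_neg, sin_neg.
  destruct r as [r1 r2], t as [t1 t2]; simpl.
  set (c := E / (VF * hbar)).
  transitivity (c ^ 2 * (- 2 * sin phi * ((cos phi * r1 + sin phi * r2) * t1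
                                          + (cos phi * r2 - sin phi * r1) * t2)
     + (1 - (sin phi * sin phi + cos phi * cos phi)) * (t2 + r1 * t2 - r2 * t1))).
  - ring.
  - rewrite Hpy; ring.
Qed.

Lemma Im_i_mul_div (w r t : CC) :
  Im (Cmul Ci (Cmul w (Cdiv r t))) =
  Re (Cmul (Cmul w r) (Cconj t)) / (Re t ^ 2 + Im t ^ 2).
Proof.
  unfold Cdiv, Cinv, Cconj, Cmul, Ci, Re, Im; simpl; unfold Rdiv; ring.
Qed.

Theorem proposition1
  (U : R -> R) (E VF hbar theta : R) (Psi : R -> C2) (r t : CC) (L : R)
  (HUpc : piecewise_continuous U)
  (HUsupp : compact_support U)
  (HUeven : forall x, U (- x) = U x)
  (HE : 0 < E) (HVF : 0 < VF) (Hhbar : 0 < hbar)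
  (Htheta : - (PI / 2) < theta < PI / 2) :
  let a := E / (hbar * VF) * sin theta in
  let k := E / (hbar * VF) * cos theta in
  let phi := PI / 2 - theta in
  (forall x, L < Rabs x -> U x = 0) ->
  is_solution U E VF hbar a Psi ->
  (forall x, x < - L ->
     Psi x = C2add (psiR E VF hbar phi k x) (C2scal r (psiL E VF hbar phi k x))) ->
  (forall x, L < x -> Psi x = C2scal t (psiR E VF hbar phi k x)) ->
  t <> (0, 0) ->
  Im (Cmul Ci (Cmul (Cexpi (- phi)) (Cdiv r t))) = 0.
Proof.
  intros a k phi _ HPsi Hleft Hright _.
  assert (Hk : 0 < k).
  { unfold k. assert (0 < cos theta) by (apply cos_gt_0; lra).
    assert (0 < E / (hbar * VF)) by (apply Rdiv_lt_0_compat; nra). nra. }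
  destruct (exists_period_point_gt k L Hk) as [x0 [n [Hx0 Hkx0]]].
  destruct (psi_at_period_point E VF hbar phi k x0 n Hkx0) as [HR [HR' HL']].
  pose proof (reflected_flux_eq_0 U E VF hbar a Psi HUeven HPsi x0) as Hflux.
  rewrite (Hleft (- x0)), (Hright x0), HR, HR', HL', flux_scattering_states in Hflux
    by lra.
  assert (Hsin : 0 < sin phi) by (apply sin_gt_0; unfold phi; lra).
  assert (Hc : 0 < E / (VF * hbar)) by (apply Rdiv_lt_0_compat; nra).
  assert (Hcross : Re (Cmul (Cmul (Cexpi (- phi)) r) (Cconj t)) = 0).
  { apply Rmult_integral in Hflux as [Hflux|]; [|assumption].
    exfalso; revert Hflux; apply Rmult_integral_contrapositive; split; nra. }
  rewrite Im_i_mul_div, Hcross; unfold Rdiv; ring.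
Qed.
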